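(* Consider $N$ learners $\mathcal V=\{1,\dots,N\}$ running the privacy-preserving decentralized aggregation algorithm described in the context for rounds $t=1,\dots,T$, with communication graphs $\mathcal G^{(t)}$ that are undirected, connected, and fixed within each round $t$. Let $A^{(t)}=[a_{ij}^{(t)}]\in\mathbb R^{N\times N}$ be the Metropolis–Hastings matrix of $\mathcal G^{(t)}$ (with $a_{ij}^{(t)}=0$ when $j\notin\bar{\mathcal N}_i^{(t)}$), and let $1_N$ be the all-ones vector in $\mathbb R^N$. Suppose the prime $p$ and the number of consensus iterations $K$ satisfy $$p>\max\Big\{N,\;1+2\cdot 10^{\sigma}N\max_{t,i,l}|\theta_{il}^{(t)}|\Big\},\qquad \max_{t}\,2p\sqrt N\,\big\|N(A^{(t)})^K-1_N1_N^T\big\|<1,$$ where the maximum is over $t\in\{1,\dots,T\}$, $i\in\mathcal V$, $l\in\{1,\dots,n\}$, and $\|\cdot\|$ is the $\ell_2$ (spectral) norm of a matrix. Then $\tilde\theta_i^{(t)}=\theta^{(t)}=\sum_{j\in\mathcal V}w_j\theta_j^{(t)}$ for all $i\in\mathcal V$ and all $t\in\{1,\dots,T\}$.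
   Context: Setting. There are $N$ learners $\mathcal V=\{1,\dots,N\}$ and a model dimension $n$. Each learner $i$ has a fixed weight $w_i\in(0,1]$. In each round $t\in\{1,\dots,T\}$ each learner $i$ holds a local model $\theta_i^{(t)}=(\theta_{i1}^{(t)},\dots,\theta_{in}^{(t)})\in\mathbb R^n$ (produced by arbitrary local training), and the desired global model is $\theta^{(t)}=\sum_{i\in\mathcal V}w_i\theta_i^{(t)}$. Put $\bar\theta_i^{(t)}(0)=w_i\theta_i^{(t)}$. A precision level $\sigma\in\mathbb N$ is fixed: all real numbers are kept to $\sigma$ fractional digits, so in particular $10^\sigma\bar\theta_{il}^{(t)}(0)\in\mathbb Z$. In round $t$ the communication graph is $\mathcal G^{(t)}=(\mathcal V,\mathcal E^{(t)})$; $\mathcal N_i^{(t)}=\{j\neq i:(i,j)\in\mathcal E^{(t)}\}$ and $\bar{\mathcal N}_i^{(t)}=\mathcal N_i^{(t)}\cup\{i\}$. Algorithm (parameters: a prime $p$ and positive integers $T,K$, agreed by all learners). In each round $t$: (1) Metropolis–Hastings weights: each learner $i$ sets $a_{ij}^{(t)}=1/(\max\{|\mathcal N_i^{(t)}|,|\mathcal N_j^{(t)}|\}+1)$ for $j\in\mathcal N_i^{(t)}$, $a_{ii}^{(t)}=1-\sum_{j\in\mathcal N_i^{(t)}}a_{ij}^{(t)}$, and $a_{ij}^{(t)}=0$ otherwise. (2) Share generation: for each $j\in\bar{\mathcal N}_i^{(t)}$ learner $i$ computes $\delta_j=\prod_{r\in\bar{\mathcal N}_i^{(t)},r\ne j}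 r\,(r-j)^{-1}\bmod p$ (inverses in $\mathbb Z_p$). For each $l\in\{1,\dots,n\}$, with $\tau=|\mathcal N_i^{(t)}|$, learner $i$ picks fresh independent $c_1,\dots,c_\tau\in\mathbb Z_p$ uniformly at random with $c_\tau\ne0$, forms $H(\eta)=10^\sigma\bar\theta_{il}^{(t)}(0)+c_1\eta+\dots+c_\tau\eta^\tau$, sets $\mathcal H_{il}^{j(t)}=H(j)\bmod p$ and $\mathcal S_{il}^{j(t)}=\mathcal H_{il}^{j(t)}\delta_j\bmod p$ for $j\in\bar{\mathcal N}_i^{(t)}$. It sends $\mathcal S_i^{j(t)}=(\mathcal S_{il}^{j(t)})_{l=1}^n$ to each neighbor $j\in\mathcal N_i^{(t)}$ and keeps $\mathcal S_i^{i(t)}$. (3) Each learner $i$ forms $s_i^{(t)}(0)=\sum_{j\in\bar{\mathcal N}_i^{(t)}}\mathcal S_j^{i(t)}\bmod p$ (componentwise, values in $\{0,\dots,p-1\}$) and sends it to its neighbors. (4) For $k=0,\dots,K-1$ each learner $i$ computes, in real arithmetic, $s_i^{(t)}(k+1)=a_{ii}^{(t)}s_i^{(t)}(k)+\sum_{j\in\mathcal N_i^{(t)}}a_{ij}^{(t)}s_j^{(t)}(k)$ and sends it to its neighbors. (5) Each learner $i$ sets, for each $l$, $z_{il}^{(t)}=\lfloor N s_{il}^{(t)}(K)\rceil\bmod p$, where $\lfloor a\rceil$ is rounding to the nearest integer ($\lfloor a\rceil=\lfloor a\rfloor$ if $a-\lfloor a\rfloor<0.5$, else $\lceil a\rceil$),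 and $\tilde\theta_{il}^{(t)}=z_{il}^{(t)}/10^\sigma$ if $0\le z_{il}^{(t)}\le (p-1)/2$, $\tilde\theta_{il}^{(t)}=(z_{il}^{(t)}-p)/10^\sigma$ if $(p+1)/2\le z_{il}^{(t)}<p$; it sets $\tilde\theta_i^{(t)}=(\tilde\theta_{il}^{(t)})_{l=1}^n$ (used as its initial model for the next round's local training). *)

From HB Require Import structures.
From mathcomp Require Import all_boot all_order all_algebra.
From mathcomp Require Import classical_sets reals.
Set Implicit Arguments. Unset Strict Implicit. Unset Printing Implicit Defensive.
Import Order.TTheory GRing.Theory Num.Theory.
Local Open Scope ring_scope.
Local Open Scope classical_set_scope.

(* Communication graph of a round: a relation on learners 'I_N (learner i : 'I_N
   is the paper's learner i+1).  Neighbours exclude i itself. *)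
Definition nbrs (N : nat) (e : rel 'I_N) (i : 'I_N) : {set 'I_N} :=
  [set j | (j != i) && e i j].
Definition cnbrs (N : nat) (e : rel 'I_N) (i : 'I_N) : {set 'I_N} :=
  i |: nbrs e i.

Definition mh_weight (R : numFieldType) (N : nat) (e : rel 'I_N) (i j : 'I_N) : R :=
  if j \in nbrs e i then ((maxn #|nbrs e i| #|nbrs e j|).+1%:R)^-1
  else if j == i then
    1 - \sum_(k in nbrs e i) ((maxn #|nbrs e i| #|nbrs e k|).+1%:R)^-1
  else 0.
Definition mh_matrix (R : numFieldType) (N : nat) (e : rel 'I_N) : 'M[R]_N :=
  \matrix_(i, j) mh_weight R e i j.

Definition vnorm2 (R : realType) (N : nat) (x : 'cV[R]_N) : R :=
  Num.sqrt (\sum_i (x i 0) ^+ 2).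
Definition spec_norm (R : realType) (N : nat) (M : 'M[R]_N) : R :=
  sup [set vnorm2 (M *m x) | x in [set x : 'cV[R]_N | vnorm2 x <= 1]].

Definition lab (p N : nat) (i : 'I_N) : 'F_p := (i.+1)%:R.

(* Lagrange coefficient delta_j computed by learner i *)
Definition delta (p N : nat) (e : rel 'I_N) (i j : 'I_N) : 'F_p :=
  \prod_(r in cnbrs e i | r != j) (lab p r * (lab p r - lab p j)^-1).

Definition Hpoly (p : nat) (secret : int) (c : nat -> 'F_p) (tau : nat)
  (eta : 'F_p) : 'F_p :=
  secret%:~R + \sum_(1 <= k < tau.+1) c k * eta ^+ k.

(* Share S_{il}^{j} sent by learner i to j (Theta i l = 10^sigma * thetabar_il(0)) *)
Definition share (p N n : nat) (e : rel 'I_N) (Theta : 'I_N -> 'I_n -> int)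
  (c : 'I_N -> 'I_n -> nat -> 'F_p) (i j : 'I_N) (l : 'I_n) : 'F_p :=
  Hpoly (Theta i l) (c i l) #|nbrs e i| (lab p j) * delta p e i j.

Definition s0 (R : realType) (p N n : nat) (e : rel 'I_N)
  (Theta : 'I_N -> 'I_n -> int) (c : 'I_N -> 'I_n -> nat -> 'F_p)
  (i : 'I_N) (l : 'I_n) : R :=
  (nat_of_ord (\sum_(j in cnbrs e i) share e Theta c j i l))%:R.

Definition cons_step (R : realType) (N : nat) (e : rel 'I_N) (s : 'I_N -> R)
  : 'I_N -> R :=
  fun i => mh_weight R e i i * s i + \sum_(j in nbrs e i) mh_weight R e i j * s j.
Definition sK (R : realType) (p N n K : nat) (e : rel 'I_N)
  (Theta : 'I_N -> 'I_n -> int) (c : 'I_N -> 'I_n -> nat -> 'F_p)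
  (i : 'I_N) (l : 'I_n) : R :=
  iter K (cons_step e) (fun j => s0 R e Theta c j l) i.

Definition round_nearest (R : realType) (a : R) : int :=
  if a - (Num.floor a)%:~R < 2^-1 then Num.floor a else Num.ceil a.

Definition decode (R : realType) (p sigma : nat) (z : int) : R :=
  if z%:~R <= (p%:R - 1) / 2 :> R then z%:~R / 10%:R ^+ sigma
  else (z - p%:Z)%:~R / 10%:R ^+ sigma.

Definition tilde_theta (R : realType) (p sigma N n K : nat) (e : rel 'I_N)
  (Theta : 'I_N -> 'I_n -> int) (c : 'I_N -> 'I_n -> nat -> 'F_p)
  (i : 'I_N) (l : 'I_n) : R :=
  decode R p sigma
    ((round_nearest (N%:R * sK R K e Theta c i l) %% p%:Z)%Z).

(* Every learner j hides its secret as the constant term of a polynomial of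
   degree |N_j| and sends to each i in N_j u {j} its value at i weighted by
   the Lagrange coefficient for evaluation at 0; hence the shares sent by j
   sum to the secret modulo p, and the initial consensus values s_i(0) sum to
   the aggregate S = sum_j 10^sigma w_j theta_j modulo p.  After K consensus
   steps, N s(K) = (1 1^T) s(0) + (N A^K - 1 1^T) s(0); since 0 <= s_i(0) < p
   the error term is at most p sqrt N ||N A^K - 1 1^T|| < 1/2, so rounding
   recovers the integer sum of the s_i(0), which is congruent to S.  As
   2 |S| < p - 1, the centred residue modulo p is S itself. *)
From HB Require Import structures.
From mathcomp Require Import all_boot all_order all_algebra.
From mathcomp Require Import classical_sets reals.
From mathcomp Require Import lra.
Set Implicit Arguments. Unset Strict Implicit. Unset Printing Implicit Defensive.
Import Order.TTheory GRing.Theory Num.Theory.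
Local Open Scope ring_scope.

Section LagrangeInterpolation.
Variables (F : fieldType) (I : finType) (S : {set I}) (x : I -> F).
Hypothesis x_inj : {in S &, injective x}.

Definition lagrange_basis (i : I) : {poly F} :=
  (\prod_(r in S :\ i) (x i - x r))^-1 *: \prod_(r in S :\ i) ('X - (x r)%:P).

Lemma lagrange_basis_sample i j : i \in S -> j \in S ->
  (lagrange_basis i).[x j] = (i == j)%:R.
Proof.
move=> iS jS; rewrite hornerZ horner_prod.
have [<-|ij] := eqVneq i j.
  under [X in _ * X]eq_bigr do rewrite hornerXsubC.
  rewrite mulVf //; apply/prodf_neq0 => r /setD1P [ri rS]; rewrite subr_eq0.
  by apply: contraTneq ri => /(x_inj iS rS) ->; rewrite eqxx.
rewrite [X in _ * X](bigD1 j) /=; last by rewrite in_setD1 eq_sym ij jS.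
by rewrite hornerXsubC subrr mul0r mulr0.
Qed.

Lemma size_lagrange_basis i : i \in S -> (size (lagrange_basis i) <= #|S|)%N.
Proof.
move=> iS; apply: (leq_trans (size_scale_leq _ _)).
by rewrite -big_enum size_prod_XsubC -cardE (cardsD1 i S) iS.
Qed.

Lemma lagrange_basis0 i :
  (lagrange_basis i).[0] = \prod_(r in S :\ i) (x r / (x r - x i)).
Proof.
rewrite hornerZ horner_prod -prodfV -big_split /=.
by apply: eq_bigr => r _; rewrite hornerXsubC sub0r -opprB invrN mulrNN mulrC.
Qed.

Lemma lagrange_interpolation (P : {poly F}) : (size P <= #|S|)%N ->
  P = \sum_(i in S) P.[x i] *: lagrange_basis i.
Proof.
move=> szP; set Q := \sum_(i in S) _.
have QxE j : j \in S -> Q.[x j] = P.[x j].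
  move=> jS; rewrite horner_sum (bigD1 j) //= big1 ?addr0.
    by rewrite hornerZ lagrange_basis_sample // eqxx mulr1.
  move=> i /andP [iS ij].
  by rewrite hornerZ lagrange_basis_sample // (negbTE ij) mulr0.
have szQ : (size Q <= #|S|)%N.
  apply: (leq_trans (size_sum _ _ _)); apply/bigmax_leqP => i iS.
  by apply: (leq_trans (size_scale_leq _ _)); apply: size_lagrange_basis.
apply/eqP; rewrite -subr_eq0; apply/eqP.
apply: (@roots_geq_poly_eq0 _ _ [seq x i | i in S]).
- apply/allP => _ /fintype.imageP [j jS ->].
  by rewrite /root !hornerE QxE // subrr.
- rewrite map_inj_in_uniq ?enum_uniq // => a b.
  by rewrite !mem_enum; apply: x_inj.
- rewrite size_map -cardE; apply: (leq_trans (size_polyD _ _)).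
  by rewrite geq_max szP size_polyN szQ.
Qed.

Lemma lagrange_interpolation0 (P : {poly F}) : (size P <= #|S|)%N ->
  P.[0] = \sum_(i in S) P.[x i] * \prod_(r in S :\ i) (x r / (x r - x i)).
Proof.
move=> /lagrange_interpolation {1}->; rewrite horner_sum.
by apply: eq_bigr => i _; rewrite hornerZ lagrange_basis0.
Qed.

End LagrangeInterpolation.

Definition share_poly (p : nat) (secret : int) (c : nat -> 'F_p) (tau : nat) :
  {poly 'F_p} := \poly_(k < tau.+1) (if k == 0%N then secret%:~R else c k).

Lemma share_polyE p secret (c : nat -> 'F_p) tau eta :
  (share_poly secret c tau).[eta] = Hpoly secret c tau eta.
Proof.
rewrite horner_poly big_ord_recl /= mulr1 /Hpoly big_add1 /= big_mkord.
by congr (_ + _); apply: eq_bigr => k _.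
Qed.

Lemma share_poly0 p secret (c : nat -> 'F_p) tau :
  (share_poly secret c tau).[0] = secret%:~R.
Proof. by rewrite horner_coef0 coef_poly. Qed.

Lemma size_share_poly p secret (c : nat -> 'F_p) tau :
  (size (share_poly secret c tau) <= tau.+1)%N.
Proof. exact: size_poly. Qed.

Lemma lab_inj p N : prime p -> (N < p)%N -> injective (@lab p N).
Proof.
move=> p_pr N_lt_p a b /(congr1 (@nat_of_ord _)).
rewrite /lab !val_Fp_nat // !modn_small.
- by move=> [] /val_inj.
- exact: leq_ltn_trans (ltn_ord b) N_lt_p.
- exact: leq_ltn_trans (ltn_ord a) N_lt_p.
Qed.

Lemma card_cnbrs N (e : rel 'I_N) i : #|cnbrs e i| = #|nbrs e i|.+1.
Proof. by rewrite cardsU1 !inE eqxx. Qed.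

Lemma sum_shares_sent p N n (e : rel 'I_N) (Theta : 'I_N -> 'I_n -> int)
    (c : 'I_N -> 'I_n -> nat -> 'F_p) j l :
  prime p -> (N < p)%N ->
  \sum_(i in cnbrs e j) share e Theta c j i l = (Theta j l)%:~R.
Proof.
move=> p_pr N_lt_p.
rewrite -(share_poly0 _ (c j l) #|nbrs e j|).
rewrite (@lagrange_interpolation0 _ _ (cnbrs e j) (@lab p N)).
- apply: eq_bigr => i _; rewrite /share share_polyE /delta.
  by congr (_ * _); apply: eq_bigl => r; rewrite in_setD1 andbC.
- by move=> a b _ _; apply: lab_inj.
- by rewrite card_cnbrs size_share_poly.
Qed.

Lemma sum_shares_received p N n (e : rel 'I_N) (Theta : 'I_N -> 'I_n -> int)
    (c : 'I_N -> 'I_n -> nat -> 'F_p) l :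
  prime p -> (N < p)%N -> symmetric e ->
  \sum_i \sum_(j in cnbrs e i) share e Theta c j i l = \sum_j (Theta j l)%:~R.
Proof.
move=> p_pr N_lt_p e_sym; rewrite (exchange_big_dep predT) //=.
apply: eq_bigr => j _; rewrite -(sum_shares_sent e Theta c j l p_pr N_lt_p).
by apply: eq_bigl => i; rewrite !inE eq_sym e_sym.
Qed.

Lemma eqFp_modz p (a b : int) : prime p ->
  (a%:~R : 'F_p) = b%:~R -> (a = b %[mod p])%Z.
Proof.
move=> p_pr ab; apply/eqP.
by rewrite eqz_mod_dvd (dvdz_pcharf (pchar_Fp p_pr)) intrB ab subrr.
Qed.

Lemma sum_s0_modp p N n (e : rel 'I_N) (Theta : 'I_N -> 'I_n -> int)
    (c : 'I_N -> 'I_n -> nat -> 'F_p) l :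
  prime p -> (N < p)%N -> symmetric e ->
  ((\sum_i nat_of_ord (\sum_(j in cnbrs e i) share e Theta c j i l)%R)%N%:Z
     = \sum_j Theta j l %[mod p])%Z.
Proof.
move=> p_pr N_lt_p e_sym; apply: eqFp_modz => //.
rewrite -pmulrn natr_sum [RHS]rmorph_sum.
rewrite -(sum_shares_received Theta c l p_pr N_lt_p e_sym).
by apply: eq_bigr => i _; rewrite natr_Zp.
Qed.

Lemma round_nearest_intrD (R : realType) (k : int) (d : R) :
  `|d| < 2^-1 -> round_nearest (k%:~R + d) = k.
Proof.
rewrite /round_nearest -div1r => d_small.
have [d_ge0|d_lt0] := leP 0 d.
  rewrite ger0_norm // in d_small.
  have -> : Num.floor (k%:~R + d) = k.
    by apply: floor_def; rewrite intrD; apply/andP; split; lra.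
  by rewrite ifT //; lra.
rewrite ltr0_norm // in d_small.
have -> : Num.floor (k%:~R + d) = k - 1.
  by apply: floor_def; rewrite subrK intrB; apply/andP; split; lra.
rewrite ifF; last by rewrite intrB; apply/negbTE; rewrite -leNgt; lra.
by apply: ceil_def; rewrite intrB; apply/andP; split; lra.
Qed.

Lemma decode_modz (R : realType) p sigma (S : int) : (0 < p)%N ->
  2 * `|S%:~R| < p%:R - 1 :> R ->
  decode R p sigma (S %% p)%Z = S%:~R / 10%:R ^+ sigma.
Proof.
rewrite /decode => p_gt0 S_small.
have [S_ge0|S_lt0] := leP 0 S.
  have S_ger0 : 0 <= S%:~R :> R by rewrite ler0z.
  rewrite ger0_norm // in S_small.
  have S_lt_p : S < p%:Z by rewrite -(ltr_int R); lra.
  by rewrite modz_small ?S_ge0 // ifT //; lra.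
have S_ltr0 : S%:~R < 0 :> R by rewrite ltrz0.
rewrite ltr0_norm // in S_small.
have Sp_ge0 : 0 <= S + p%:Z by rewrite -(ler_int R) intrD; lra.
have -> : (S %% p)%Z = S + p%:Z by rewrite -modzDr modz_small // Sp_ge0 gtrDr.
by rewrite ifF ?addrK //; apply/negbTE; rewrite -ltNge intrD; lra.
Qed.

Lemma cons_step_mulmx (R : realType) N (e : rel 'I_N) (s : 'I_N -> R) i :
  cons_step e s i = (mh_matrix R e *m \col_j s j) i 0.
Proof.
rewrite /cons_step mxE [RHS](bigD1 i) //= !mxE; congr (_ + _).
rewrite [RHS]big_mkcond [LHS]big_mkcond; apply: eq_bigr => j _; rewrite !mxE.
case: ifP => [|j_nbr]; first by rewrite !inE => /andP [-> _].
by case: ifP => // ji; rewrite /mh_weight j_nbr (negbTE ji) mul0r.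
Qed.

Lemma iter_cons_step (R : realType) N (e : rel 'I_N) K (s : 'I_N -> R) i :
  iter K (cons_step e) s i = (mh_matrix R e ^+ K *m \col_j s j) i 0.
Proof.
elim: K i => [|K IH] i; first by rewrite expr0 mul1mx mxE.
rewrite iterS cons_step_mulmx exprS -mulmxE -mulmxA; congr ((_ *m _) _ _).
by apply/matrixP => j k; rewrite mxE IH (ord1 k).
Qed.

Lemma scaled_mulmx_coord (R : pzRingType) N (A : 'M[R]_N) (v : 'cV[R]_N) i :
  N%:R * (A *m v) i 0 = \sum_j v j 0 + ((N%:R *: A - const_mx 1) *m v) i 0.
Proof.
have -> : N%:R * (A *m v) i 0 = ((N%:R *: A) *m v) i 0.
  by rewrite -scalemxAl [RHS]mxE.
rewrite -[N%:R *: A in LHS](subrK (const_mx 1)) mulmxDl mxE addrC; congr (_ + _).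
by rewrite mxE; apply: eq_bigr => j _; rewrite mxE mul1r.
Qed.

Lemma vnorm2_coord (R : realType) N (z : 'cV[R]_N) i : `|z i 0| <= vnorm2 z.
Proof.
rewrite /vnorm2 -sqrtr_sqr ler_sqrt ?sumr_ge0 // => [|j _]; last exact: sqr_ge0.
by rewrite (bigD1 i) //= lerDl sumr_ge0 // => j _; exact: sqr_ge0.
Qed.

Lemma unit_ball_image_bounded (R : realType) N (M : 'M[R]_N) :
  has_ubound [set vnorm2 (M *m x) | x in [set x : 'cV[R]_N | vnorm2 x <= 1]].
Proof.
pose C := \sum_i \sum_j `|M i j|.
exists (Num.sqrt (N%:R * C ^+ 2)) => _ [x x_le1 <-].
rewrite /vnorm2 ler_sqrt; last by rewrite mulr_ge0 ?sqr_ge0.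
have -> : N%:R * C ^+ 2 = \sum_(i < N) C ^+ 2.
  by rewrite sumr_const card_ord mulr_natl.
apply: ler_sum => i _.
have coord_le : `|(M *m x) i 0| <= C.
  rewrite mxE; apply: le_trans (ler_norm_sum _ _ _) _.
  apply: (@le_trans _ _ (\sum_j `|M i j|)).
    apply: ler_sum => j _; rewrite normrM ler_piMr //.
    exact: le_trans (vnorm2_coord x j) x_le1.
  by rewrite /C [leRHS](bigD1 i) //= lerDl sumr_ge0 // => k _; exact: sumr_ge0.
have C_ge0 : 0 <= C := le_trans (normr_ge0 _) coord_le.
by rewrite -real_normK ?num_real // ler_sqr ?nnegrE.
Qed.

Lemma vnorm2_mulmx_le (R : realType) N (M : 'M[R]_N) x :
  vnorm2 x <= 1 -> vnorm2 (M *m x) <= spec_norm M.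
Proof.
by move=> x_le1; apply: (ub_le_sup (unit_ball_image_bounded M)); exists x.
Qed.

Lemma mulmx_coord_le_spec_norm (R : realType) N (M : 'M[R]_N) (v : 'cV[R]_N)
    (P : R) i :
  0 < P -> (forall j, `|v j 0| <= P) ->
  `|(M *m v) i 0| <= P * Num.sqrt N%:R * spec_norm M.
Proof.
move=> P_gt0 v_le.
have N_gt0 : (0 < N%:R :> R) by rewrite ltr0n (leq_ltn_trans _ (ltn_ord i)).
set s := P * Num.sqrt N%:R.
have s_gt0 : 0 < s by rewrite mulr_gt0 // sqrtr_gt0.
have s2 : s ^+ 2 = P ^+ 2 * N%:R by rewrite exprMn sqr_sqrtr // ltW.
have y_le1 : vnorm2 (s^-1 *: v) <= 1.
  rewrite /vnorm2 -sqrtr1 ler_sqrt //.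
  have -> : 1 = \sum_(j < N) (N%:R : R)^-1.
    by rewrite sumr_const card_ord -(mulr_natr (N%:R^-1)) mulVf ?gt_eqF.
  apply: ler_sum => j _; rewrite mxE exprMn exprVn s2 invfM mulrAC.
  rewrite ler_piMl ?invr_ge0 ?ler0n // mulrC ler_pdivrMr ?exprn_gt0 // mul1r.
  by rewrite -real_normK ?num_real // ler_sqr ?nnegrE ?(ltW P_gt0).
rewrite -[v](scalerKV (lt0r_neq0 s_gt0)) -scalemxAr mxE normrM gtr0_norm //.
rewrite ler_pM2l //.
exact: le_trans (vnorm2_coord _ i) (vnorm2_mulmx_le M y_le1).
Qed.

Lemma weighted_sum_bound (R : realFieldType) N (w a : 'I_N -> R) (m P : R) :
  (0 < N)%N -> 0 <= m -> (forall j, 0 < w j <= 1) ->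
  (forall j, 1 + 2 * m * N%:R * `|a j| < P) ->
  2 * `|m * \sum_j w j * a j| < P - 1.
Proof.
move=> N_gt0 m_ge0 w_range a_bound.
have sum_le : `|\sum_j w j * a j| <= \sum_j `|a j|.
  apply: le_trans (ler_norm_sum _ _ _) _; apply: ler_sum => j _.
  by have /andP [w_gt0 w_le1] := w_range j; rewrite normrM gtr0_norm // ler_piMl.
have : N%:R * (2 * m * \sum_j `|a j|) < N%:R * (P - 1).
  have -> : N%:R * (P - 1) = \sum_(j < N) (P - 1).
    by rewrite sumr_const card_ord mulr_natl.
  rewrite !mulr_sumr.
  apply: ltr_sum => [|j _]; first by apply/hasP; exists (Ordinal N_gt0).
  by have := a_bound j; lra.
rewrite ltr_pM2l ?ltr0n // normrM ger0_norm //.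
have := ler_wpM2l m_ge0 sum_le; lra.
Qed.

Lemma s0_lt_prime (R : realType) p N n (e : rel 'I_N)
    (Theta : 'I_N -> 'I_n -> int) (c : 'I_N -> 'I_n -> nat -> 'F_p) j l :
  prime p -> s0 R e Theta c j l < p%:R.
Proof.
by move=> p_pr; rewrite ltr_nat -[X in (_ < X)%N](Fp_cast p_pr) ltn_ord.
Qed.

Theorem theorem6p1 (R : realType) (N n T K sigma p : nat)
  (w : 'I_N -> R) (theta : 'I_T -> 'I_N -> 'I_n -> R)
  (Theta : 'I_T -> 'I_N -> 'I_n -> int)
  (e : 'I_T -> rel 'I_N)
  (c : 'I_T -> 'I_N -> 'I_n -> nat -> 'F_p) :
  prime p ->
  (forall i, 0 < w i <= 1) ->
  (forall t i l, 10%:R ^+ sigma * (w i * theta t i l) = (Theta t i l)%:~R) ->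
  (forall t, symmetric (e t)) ->
  (forall t i j, connect (e t) i j) ->
  (forall t i l, (0 < #|nbrs (e t) i|)%N -> c t i l #|nbrs (e t) i| != 0) ->
  (N < p)%N ->
  (forall t i l,
     1 + 2 * 10%:R ^+ sigma * N%:R * `|theta t i l| < p%:R :> R) ->
  (forall t, 2 * p%:R * Num.sqrt N%:R *
     spec_norm (N%:R *: (mh_matrix R (e t)) ^+ K - const_mx 1) < 1 :> R) ->
  forall (t : 'I_T) (i : 'I_N) (l : 'I_n),
    @tilde_theta R p sigma N n K (e t) (Theta t) (c t) i l
    = \sum_(j < N) w j * theta t j l.
Proof.
move=> p_pr w_range scaled_input e_sym _ _ N_lt_p theta_bound spectral t i l.
have N_gt0 : (0 < N)%N := leq_ltn_trans (leq0n i) (ltn_ord i).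
set S := \sum_j Theta t j l.
set X := (\sum_j nat_of_ord
           (\sum_(k in cnbrs (e t) j) share (e t) (Theta t) (c t) k j l)%R)%N.
set v := \col_j s0 R (e t) (Theta t) (c t) j l.
have sum_v : \sum_j v j 0 = (X%:Z)%:~R.
  by rewrite -pmulrn natr_sum; apply: eq_bigr => j _; rewrite mxE.
have consensus_err :
    `|((N%:R *: mh_matrix R (e t) ^+ K - const_mx 1) *m v) i 0| < 2^-1.
  have p_gt0 : 0 < p%:R :> R by rewrite ltr0n prime_gt0.
  have v_le j : `|v j 0| <= p%:R.
    by rewrite mxE ger0_norm ?ler0n // ltW // s0_lt_prime.
  have := mulmx_coord_le_spec_norm
    (N%:R *: mh_matrix R (e t) ^+ K - const_mx 1) i p_gt0 v_le.
  by have := spectral t; rewrite -div1r; lra.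
have S_scaled : S%:~R = 10%:R ^+ sigma * \sum_j w j * theta t j l :> R.
  by rewrite rmorph_sum mulr_sumr; apply: eq_bigr => j _; rewrite scaled_input.
rewrite /tilde_theta /sK iter_cons_step scaled_mulmx_coord sum_v.
rewrite round_nearest_intrD // (sum_s0_modp _ _ _ p_pr N_lt_p (e_sym t)).
rewrite decode_modz ?prime_gt0 // S_scaled.
  by rewrite mulrC mulKf // expf_neq0 // pnatr_eq0.
by apply: weighted_sum_bound => //; rewrite exprn_ge0 ?ler0n.
Qed.
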